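(* SP, BTI, WF, PCI, IRE and RPI hold for the LTSIs of CCSKP (CCSK with proof labels) and CCSK.
   Context: CCSK processes: $X ::= \mathbf{0} \mid \alpha.X \mid X\backslash\lambda \mid X+Y \mid X \mid Y \mid \alpha[k].X$, where $\alpha$ ranges over names, co-names and $\tau$, $\lambda$ over non-$\tau$ labels, and $k$ over keys; $\mathrm{keys}(X)$ is the set of keys in $X$, and $X$ is standard if $\mathrm{keys}(X)=\emptyset$. Only reachable processes (reachable by a path from a standard process) are considered. CCSKP forward rules (with proof keyed labels $\theta$ built from strings over $\mid_L,\mid_R,+_L,+_R$, actions $\alpha[k]$ and synchronisation pairs $\langle\upsilon_1\lambda[k],\upsilon_2\overline\lambda[k]\rangle$, each having a key): act: $\alpha.X \to^{\alpha[k]} \alpha[k].X$ if $X$ standard; pre: $\alpha[k].X \to^{\theta} \alpha[k].X'$ if $X\to^\theta X'$ and the key of $\theta$ is not $k$; res: $X\backslash a \to^\theta X'\backslash a$ if $X\to^\theta X'$ and the action of $\theta$ is not $a$ or $\overline a$; par: $X\mid Y \to^{\mid_L\theta} X'\mid Y$ if $X\to^\theta X'$ and the key of $\theta$ is not in $\mathrm{keys}(Y)$ (symmetrically on the right); syn: $X\mid Y \to^{\langle\upsilon_L\lambda[k],\upsilon_R\overline\lambda[k]\rangle} X'\mid Y'$ if $X\to^{\upsilon_L\lambda[k]}X'$ and $Y\to^{\upsilon_R\overline\lambda[k]}Y'$; sum: $X+Y\to^{+_L\theta}X'+Y$ if $X\to^\theta X'$ and $Y$ standard (symmetrically on the right).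 Backward transitions are the inverses of forward ones. CCSK has the same rules with labels $\alpha[k]$ only (proof part erased); CCSK and CCSKP transitions are in bijection. Two transitions are connected if there is a path from the source of one to the target of the other. The independence relation: two transitions are independent iff they are connected and their proof keyed labels (for CCSK, those of the corresponding CCSKP transitions) are independent, where label independence is the least relation with: $+_d\theta$ independent of $+_d\theta'$ if $\theta$ independent of $\theta'$; $\mid_d\theta$ independent of $\mid_d\theta'$ if $\theta$ independent of $\theta'$; $\mid_d\theta$ independent of $\mid_{\overline d}\theta'$ if their keys differ; $\mid_d\theta$ independent of $\langle\theta_L,\theta_R\rangle$ (and symmetrically) if $\theta$ independent of $\theta_d$; $\langle\theta_1,\theta_2\rangle$ independent of $\langle\theta'_1,\theta'_2\rangle$ if $\theta_1$ independent of $\theta'_1$ and $\theta_2$ independent of $\theta'_2$. An LTSI is a combined forward/backward LTS with an irreflexive symmetric independence relation on transitions. Axioms: SP (square property): coinitial independent $t:P\to^\alpha Q$, $u:P\to^\beta R$ admit cofinal $u':Q\to^\beta S$, $t':R\to^\alpha S$. BTI: distinct coinitial backward transitions are independent. WF: no infinite backward computation. PCI: in such a square with $t$ independent of $u$, $u'$ is independent of the inverse of $t$. IRE: if $t\sim t'$ and $t'$ independent of $u$ then $t$ independent of $u$, where $\sim$ (event equivalence) is the least equivalence relating opposite sides $t,t'$ of squares built from independent coinitial $t,u$. RPI: if $t$ independent of $t'$ then the inverse of $t$ is independent of $t'$. *)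

From Stdlib Require Import List Relations.
Set Implicit Arguments.

Definition name := nat.
Definition key := nat.

Inductive nlab := LName (a : name) | LCo (a : name).
Definition compl (l : nlab) : nlab :=
  match l with LName a => LCo a | LCo a => LName a end.

Inductive act := AL (l : nlab) | Tau.

(** X ::= 0 | alpha.X | X\lambda | X+Y | X|Y | alpha[k].X *)
Inductive proc :=
| Nil
| Pre  (a : act) (X : proc)
| Res  (X : proc) (l : nlab)
| Sum  (X Y : proc)
| Par  (X Y : proc)
| KPre (a : act) (k : key) (X : proc).

Fixpoint keys (X : proc) : list key :=
  match X with
  | Nil => nil
  | Pre _ X => keys X
  | Res X _ => keys X
  | Sum X Y => keys X ++ keys Y
  | Par X Y => keys X ++ keys Y
  | KPre _ k X => k :: keys X
  end.

Definition std (X : proc) : Prop := keys X = nil.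

Inductive side := SL | SR.
Definition opp (d : side) := match d with SL => SR | SR => SL end.

Inductive plab :=
| PA   (a : act) (k : key)
| PPar (d : side) (t : plab)
| PSum (d : side) (t : plab)
| PSyn (t1 t2 : plab).

Fixpoint pkey (t : plab) : key :=
  match t with
  | PA _ k => k | PPar _ t => pkey t | PSum _ t => pkey t | PSyn t1 _ => pkey t1
  end.

Fixpoint pact (t : plab) : act :=
  match t with
  | PA a _ => a | PPar _ t => pact t | PSum _ t => pact t | PSyn _ _ => Tau
  end.

Inductive ptrans : proc -> plab -> proc -> Prop :=
| p_act a X k : std X -> ptrans (Pre a X) (PA a k) (KPre a k X)
| p_pre a k X t X' :
    ptrans X t X' -> pkey t <> k -> ptrans (KPre a k X) t (KPre a k X')
| p_res X t X' l :
    ptrans X t X' -> pact t <> AL l -> pact t <> AL (compl l) ->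
    ptrans (Res X l) t (Res X' l)
| p_parL X Y t X' :
    ptrans X t X' -> ~ In (pkey t) (keys Y) ->
    ptrans (Par X Y) (PPar SL t) (Par X' Y)
| p_parR X Y t Y' :
    ptrans Y t Y' -> ~ In (pkey t) (keys X) ->
    ptrans (Par X Y) (PPar SR t) (Par X Y')
| p_syn X Y X' Y' tL tR l :
    ptrans X tL X' -> ptrans Y tR Y' ->
    pact tL = AL l -> pact tR = AL (compl l) -> pkey tL = pkey tR ->
    ptrans (Par X Y) (PSyn tL tR) (Par X' Y')
| p_sumL X Y t X' :
    ptrans X t X' -> std Y -> ptrans (Sum X Y) (PSum SL t) (Sum X' Y)
| p_sumR X Y t Y' :
    ptrans Y t Y' -> std X -> ptrans (Sum X Y) (PSum SR t) (Sum X Y').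

Definition klab := (act * key)%type.

Inductive ctrans : proc -> klab -> proc -> Prop :=
| c_act a X k : std X -> ctrans (Pre a X) (a, k) (KPre a k X)
| c_pre a k X b k' X' :
    ctrans X (b, k') X' -> k' <> k -> ctrans (KPre a k X) (b, k') (KPre a k X')
| c_res X b k X' l :
    ctrans X (b, k) X' -> b <> AL l -> b <> AL (compl l) ->
    ctrans (Res X l) (b, k) (Res X' l)
| c_parL X Y b k X' :
    ctrans X (b, k) X' -> ~ In k (keys Y) -> ctrans (Par X Y) (b, k) (Par X' Y)
| c_parR X Y b k Y' :
    ctrans Y (b, k) Y' -> ~ In k (keys X) -> ctrans (Par X Y) (b, k) (Par X Y')
| c_syn X Y X' Y' l k :
    ctrans X (AL l, k) X' -> ctrans Y (AL (compl l), k) Y' ->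
    ctrans (Par X Y) (Tau, k) (Par X' Y')
| c_sumL X Y b k X' :
    ctrans X (b, k) X' -> std Y -> ctrans (Sum X Y) (b, k) (Sum X' Y)
| c_sumR X Y b k Y' :
    ctrans Y (b, k) Y' -> std X -> ctrans (Sum X Y) (b, k) (Sum X Y').

Definition erase (t : plab) : klab := (pact t, pkey t).

Definition pick (d : side) (tL tR : plab) := match d with SL => tL | SR => tR end.

Inductive pind : plab -> plab -> Prop :=
| i_sum d t t' : pind t t' -> pind (PSum d t) (PSum d t')
| i_par d t t' : pind t t' -> pind (PPar d t) (PPar d t')
| i_par_opp d t t' : pkey t <> pkey t' -> pind (PPar d t) (PPar (opp d) t')
| i_par_syn d t tL tR : pind t (pick d tL tR) -> pind (PPar d t) (PSyn tL tR)
| i_syn_par d t tL tR : pind (pick d tL tR) t -> pind (PSyn tL tR) (PPar d t)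
| i_syn t1 t2 t1' t2' :
    pind t1 t1' -> pind t2 t2' -> pind (PSyn t1 t2) (PSyn t1' t2').

(** a transition: source, label, target, direction (true = forward) *)
Record trans (St L : Type) := Tr { src : St; lab : L; tgt : St; fwd : bool }.

Section LTSI.
Variables (St L : Type) (F : St -> L -> St -> Prop) (st : St -> Prop).
Variable I : trans St L -> trans St L -> Prop.

Definition step (P Q : St) : Prop := exists l, F P l Q \/ F Q l P.
Definition reach : St -> St -> Prop := clos_refl_trans St step.
Definition reachable (P : St) : Prop := exists P0, st P0 /\ reach P0 P.

Definition valid (t : trans St L) : Prop :=
  if fwd t then F (src t) (lab t) (tgt t) else F (tgt t) (lab t) (src t).
Definition in_lts (t : trans St L) : Prop := reachable (src t) /\ valid t.

Definition connected (t u : trans St L) : Prop := reach (src t) (tgt u).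
Definition inv (t : trans St L) : trans St L :=
  Tr (tgt t) (lab t) (src t) (negb (fwd t)).

(** t : P -a-> Q, u : P -b-> R, u' : Q -b-> S, t' : R -a-> S *)
Definition square (t u u' t' : trans St L) : Prop :=
  in_lts t /\ in_lts u /\ in_lts u' /\ in_lts t' /\
  src t = src u /\ src u' = tgt t /\ src t' = tgt u /\ tgt u' = tgt t' /\
  lab u' = lab u /\ fwd u' = fwd u /\ lab t' = lab t /\ fwd t' = fwd t.

Definition SP : Prop :=
  forall t u, in_lts t -> in_lts u -> src t = src u -> I t u ->
  exists u' t', square t u u' t'.

Definition BTI : Prop :=
  forall t u, in_lts t -> in_lts u -> fwd t = false -> fwd u = false ->
  src t = src u -> t <> u -> I t u.

Definition WF : Prop :=
  ~ exists f : nat -> St, reachable (f 0) /\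
      forall n, exists l, F (f (S n)) l (f n).

Definition PCI : Prop :=
  forall t u u' t', square t u u' t' -> I t u -> I u' (inv t).

Definition ev_eq : trans St L -> trans St L -> Prop :=
  clos_refl_sym_trans (trans St L)
    (fun t t' => exists u u', square t u u' t' /\ I t u).

Definition IRE : Prop :=
  forall t t' u, in_lts t -> in_lts t' -> in_lts u ->
  ev_eq t t' -> I t' u -> I t u.

Definition RPI : Prop :=
  forall t t', in_lts t -> in_lts t' -> I t t' -> I (inv t) t'.

End LTSI.

Definition pI (t u : trans proc plab) : Prop :=
  connected ptrans t u /\ pind (lab t) (lab u).

Definition corr (t : trans proc klab) (th : plab) : Prop :=
  valid ptrans (Tr (src t) th (tgt t) (fwd t)) /\ erase th = lab t.

Definition cI (t u : trans proc klab) : Prop :=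
  connected ctrans t u /\
  exists th th', corr t th /\ corr u th' /\ pind th th'.

(* Keys make proof-labelled transitions rigid: a forward step adds one fresh
   key, so the number of keys grows along forward steps (WF), and a backward
   step is determined by its target together with its key.  Independent proof
   labels act on disjoint parts of a process, so a structural induction, done
   once for both directions of each step, closes every square (SP); rigidity
   makes distinct backward steps from one process independent (BTI).
   Independence only depends on labels and reachability, which survive the
   reversal of a step and the passage to the opposite side of a square (PCI,
   IRE, RPI).
   CCSK inherits all of this through the label-erasing correspondence with
   CCSKP.  The extra point is that opposite sides of a CCSK square carry the
   same proof labels; for two forward steps this follows by closing the
   backward square at the top corner, which leads back to the bottom one. *)

From Stdlib Require Import List Relations Lia.
Set Implicit Arguments.
Unset Strict Implicit.

Section LTSFacts.
Variables (St L : Type) (F : St -> L -> St -> Prop).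

Lemma reach_sym P Q : reach F P Q -> reach F Q P.
Proof.
  induction 1 as [P Q (l & H) | P | P Q R _ IH1 _ IH2].
  - apply rt_step; exists l; tauto.
  - apply rt_refl.
  - exact (rt_trans _ _ _ _ _ IH2 IH1).
Qed.

Lemma valid_reach t : valid F t -> reach F (src t) (tgt t).
Proof. unfold valid; destruct (fwd t); intro H; apply rt_step; exists (lab t); auto. Qed.

Lemma connected_inv t u : valid F t -> connected F t u -> connected F (inv t) u.
Proof. intros Ht Htu; exact (rt_trans _ _ _ _ _ (reach_sym (valid_reach Ht)) Htu). Qed.

Variable st : St -> Prop.

Lemma in_lts_reachable_tgt t : in_lts F st t -> reachable F st (tgt t).
Proof.
  intros ((P0 & H0 & HP0) & Ht).
  exists P0; split; [exact H0 | exact (rt_trans _ _ _ _ _ HP0 (valid_reach Ht))].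
Qed.

Lemma square_intro P Q R S a c b b' :
  in_lts F st (Tr P a Q b) -> in_lts F st (Tr P c R b') ->
  valid F (Tr Q c S b') -> valid F (Tr R a S b) ->
  square F st (Tr P a Q b) (Tr P c R b') (Tr Q c S b') (Tr R a S b).
Proof.
  intros Ht Hu Hu' Ht'.
  pose proof (in_lts_reachable_tgt Ht); pose proof (in_lts_reachable_tgt Hu).
  destruct Ht, Hu; repeat split; assumption.
Qed.

Lemma square_connected_inv t u u' t' : square F st t u u' t' -> connected F u' (inv t).
Proof.
  intros ((_ & Ht) & _ & _ & _ & _ & E & _); unfold connected; simpl; rewrite E.
  exact (reach_sym (valid_reach Ht)).
Qed.

Lemma ev_eq_lab I t t' : ev_eq F st I t t' -> lab t = lab t'.
Proof.
  induction 1 as [t t' (u & u' & Hsq & _) | | |]; try congruence.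
  destruct Hsq as (_ & _ & _ & _ & _ & _ & _ & _ & _ & _ & E & _); congruence.
Qed.

Lemma ev_eq_reach I t t' : ev_eq F st I t t' -> reach F (src t) (src t').
Proof.
  induction 1 as [t t' (u & u' & Hsq & _) | t | t t' _ IH | t t' t'' _ IH1 _ IH2].
  - destruct Hsq as (_ & (_ & Hu) & _ & _ & E1 & _ & E3 & _).
    rewrite E1, E3; exact (valid_reach Hu).
  - apply rt_refl.
  - exact (reach_sym IH).
  - exact (rt_trans _ _ _ _ _ IH1 IH2).
Qed.

Lemma ev_eq_connected I t t' u : ev_eq F st I t t' -> connected F t' u -> connected F t u.
Proof. intros He Hc; exact (rt_trans _ _ _ _ _ (ev_eq_reach He) Hc). Qed.

Lemma WF_of_measure (m : St -> nat) : (forall P l Q, F P l Q -> m P < m Q) -> WF F st.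
Proof.
  intros Hm (f & _ & Hf).
  assert (Hdec : forall n, m (f n) + n <= m (f 0)).
  { induction n as [| n IH]; [lia |].
    destruct (Hf n) as (l & Hl); specialize (Hm _ _ _ Hl); lia. }
  specialize (Hdec (S (m (f 0)))); lia.
Qed.

End LTSFacts.

Lemma ptrans_key_fresh X t X' : ptrans X t X' -> ~ In (pkey t) (keys X).
Proof.
  induction 1 as [a X k Hs | a k X t X' _ IH Hk | X t X' l _ IH _ _ | X Y t X' _ IH HY
                 | X Y t Y' _ IH HX | X Y X' Y' tL tR l _ IHL _ IHR _ _ Hk
                 | X Y t X' _ IH HY | X Y t Y' _ IH HX];
    simpl; rewrite ?in_app_iff.
  - rewrite Hs; auto.
  - intros [E | E]; [congruence | tauto].
  - exact IH.
  - tauto.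
  - tauto.
  - rewrite Hk in IHL |- *; tauto.
  - rewrite HY; simpl; tauto.
  - rewrite HX; simpl; tauto.
Qed.

Lemma ptrans_key_in X t X' : ptrans X t X' -> In (pkey t) (keys X').
Proof. induction 1; simpl in *; rewrite ?in_app_iff; tauto. Qed.

Lemma ptrans_keys_incl X t X' : ptrans X t X' -> incl (keys X) (keys X').
Proof.
  induction 1; simpl; auto using incl_app_app, incl_tl, incl_refl, incl_cons, in_eq.
Qed.

Lemma ptrans_keys_new X t X' k :
  ptrans X t X' -> In k (keys X') -> k = pkey t \/ In k (keys X).
Proof. induction 1; simpl in *; rewrite ?in_app_iff; intuition congruence. Qed.

Lemma ptrans_keys_length X t X' : ptrans X t X' -> length (keys X) < length (keys X').
Proof. induction 1; simpl; rewrite ?length_app; lia. Qed.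

Lemma ptrans_irrefl X t : ~ ptrans X t X.
Proof. intro H; apply ptrans_keys_length in H; lia. Qed.

Lemma std_no_ptrans_to X X' t : std X -> ~ ptrans X' t X.
Proof. intros Hs H; apply ptrans_key_in in H; rewrite Hs in H; exact H. Qed.

Lemma ptrans_backward_det P Q1 Q2 t1 t2 :
  ptrans Q1 t1 P -> ptrans Q2 t2 P -> pkey t1 = pkey t2 -> t1 = t2 /\ Q1 = Q2.
Proof.
  revert Q1 Q2 t1 t2.
  induction P; intros Q1 Q2 t1 t2 H1 H2 Hk;
    inversion H1; subst; inversion H2; subst; simpl in *;
    (* in the mixed cases the key would come from a standard process, or from
       a component whose keys a side condition excludes *)
    try solve [exfalso; eapply std_no_ptrans_to; eauto].
  all: try solve [exfalso; match goal with
         | N : ~ In ?k (keys ?Z), H : ptrans _ ?t ?Z |- _ =>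
             apply N; replace k with (pkey t) by congruence; exact (ptrans_key_in H) end].
  all: repeat match goal with
         | IH : forall Q1 Q2 t1 t2, ptrans Q1 t1 ?Z -> _,
           A : ptrans _ _ ?Z, B : ptrans _ _ ?Z |- _ =>
             destruct (IH _ _ _ _ A B) as [-> ->]; [congruence | clear A B] end.
  all: auto.
Qed.

Lemma ptrans_label_det P Q t1 t2 : ptrans P t1 Q -> ptrans P t2 Q -> t1 = t2.
Proof.
  intro H1; revert t2; induction H1; intros t2 H2; inversion H2; subst;
    try solve [f_equal; auto | exfalso; eapply ptrans_irrefl; eassumption].
Qed.

Lemma pind_sym t u : pind t u -> pind u t.
Proof.
  induction 1; try (constructor; assumption).
  replace d with (opp (opp d)) at 2 by (destruct d; reflexivity).
  constructor; congruence.
Qed.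

Definition dtrans (b : bool) (P : proc) (th : plab) (Q : proc) : Prop :=
  if b then ptrans P th Q else ptrans Q th P.

Lemma dtrans_keys_new b X t X' k :
  dtrans b X t X' -> In k (keys X') -> k = pkey t \/ In k (keys X).
Proof.
  destruct b; simpl; intros H Hk.
  - exact (ptrans_keys_new H Hk).
  - right; exact (ptrans_keys_incl H Hk).
Qed.

Lemma dtrans_key_notin b X t X' k :
  dtrans b X t X' -> k <> pkey t -> ~ In k (keys X) -> ~ In k (keys X').
Proof. intros H Hk HX HX'; destruct (dtrans_keys_new H HX'); auto. Qed.

Lemma square_keys_neq b b' X X1 X2 S th th' :
  dtrans b X th X1 -> dtrans b' X th' X2 -> dtrans b' X1 th' S -> pkey th <> pkey th'.
Proof.
  destruct b, b'; simpl; intros H1 H2 H3 E.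
  - apply (ptrans_key_fresh H3); rewrite <- E; exact (ptrans_key_in H1).
  - apply (ptrans_key_fresh H1); rewrite E; exact (ptrans_key_in H2).
  - apply (ptrans_key_fresh H2); rewrite <- E; exact (ptrans_key_in H1).
  - apply (ptrans_key_fresh H1); rewrite E; exact (ptrans_key_in H3).
Qed.

Section DtransRules.
Variable b : bool.

Lemma dtrans_res X l th X' : dtrans b X th X' -> pact th <> AL l -> pact th <> AL (compl l) ->
  dtrans b (Res X l) th (Res X' l).
Proof. destruct b; simpl; intros; constructor; assumption. Qed.

Lemma dtrans_sumL X Y t X' : dtrans b X t X' -> std Y -> dtrans b (Sum X Y) (PSum SL t) (Sum X' Y).
Proof. destruct b; simpl; intros; constructor; assumption. Qed.

Lemma dtrans_sumR X Y t Y' : dtrans b Y t Y' -> std X -> dtrans b (Sum X Y) (PSum SR t) (Sum X Y').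
Proof. destruct b; simpl; intros; constructor; assumption. Qed.

Lemma dtrans_parL X Y t X' :
  dtrans b X t X' -> ~ In (pkey t) (keys Y) -> dtrans b (Par X Y) (PPar SL t) (Par X' Y).
Proof. destruct b; simpl; intros; constructor; assumption. Qed.

Lemma dtrans_parR X Y t Y' :
  dtrans b Y t Y' -> ~ In (pkey t) (keys X) -> dtrans b (Par X Y) (PPar SR t) (Par X Y').
Proof. destruct b; simpl; intros; constructor; assumption. Qed.

Lemma dtrans_syn X Y X' Y' tL tR l :
  dtrans b X tL X' -> dtrans b Y tR Y' ->
  pact tL = AL l -> pact tR = AL (compl l) -> pkey tL = pkey tR ->
  dtrans b (Par X Y) (PSyn tL tR) (Par X' Y').
Proof. destruct b; simpl; intros; econstructor; eassumption. Qed.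

Lemma dtrans_kpre a k X th X' :
  dtrans b X th X' -> pkey th <> k -> dtrans b (KPre a k X) th (KPre a k X').
Proof. destruct b; simpl; intros; constructor; assumption. Qed.

Lemma dtrans_nil_inv th Q : ~ dtrans b Nil th Q.
Proof. destruct b; simpl; intro H; inversion H. Qed.

Lemma dtrans_pre_inv a X th Q : dtrans b (Pre a X) th Q -> exists a' k, th = PA a' k.
Proof. destruct b; simpl; intro H; inversion H; eauto. Qed.

Lemma dtrans_res_inv X l th Q : dtrans b (Res X l) th Q ->
  exists X', Q = Res X' l /\ dtrans b X th X' /\ pact th <> AL l /\ pact th <> AL (compl l).
Proof. destruct b; simpl; intro H; inversion H; subst; eauto 7. Qed.

Lemma dtrans_sum_inv X Y th Q : dtrans b (Sum X Y) th Q ->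
  (exists t X', th = PSum SL t /\ Q = Sum X' Y /\ dtrans b X t X' /\ std Y) \/
  (exists t Y', th = PSum SR t /\ Q = Sum X Y' /\ dtrans b Y t Y' /\ std X).
Proof. destruct b; simpl; intro H; inversion H; subst; eauto 10. Qed.

Lemma dtrans_par_inv X Y th Q : dtrans b (Par X Y) th Q ->
  (exists t X', th = PPar SL t /\ Q = Par X' Y /\ dtrans b X t X' /\ ~ In (pkey t) (keys Y)) \/
  (exists t Y', th = PPar SR t /\ Q = Par X Y' /\ dtrans b Y t Y' /\ ~ In (pkey t) (keys X)) \/
  (exists tL tR X' Y' l, th = PSyn tL tR /\ Q = Par X' Y' /\ dtrans b X tL X' /\
     dtrans b Y tR Y' /\ pact tL = AL l /\ pact tR = AL (compl l) /\ pkey tL = pkey tR).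
Proof. destruct b; simpl; intro H; inversion H; subst; eauto 20. Qed.

Lemma dtrans_kpre_inv a k X th Q : dtrans b (KPre a k X) th Q ->
  (exists X', Q = KPre a k X' /\ dtrans b X th X' /\ pkey th <> k) \/
  (b = false /\ th = PA a k /\ std X /\ Q = Pre a X).
Proof. destruct b; simpl; intro H; inversion H; subst; eauto 10. Qed.

End DtransRules.

Definition diamond (P : proc) : Prop :=
  forall b b' th th' Q R, pind th th' -> dtrans b P th Q -> dtrans b' P th' R ->
  exists S, dtrans b' Q th' S /\ dtrans b R th S.

Lemma diamond_res X l : diamond X -> diamond (Res X l).
Proof.
  intros DX b b' th th' Q R Hp H1 H2.
  destruct (dtrans_res_inv H1) as (X1 & -> & HX1 & A1 & B1).
  destruct (dtrans_res_inv H2) as (X2 & -> & HX2 & A2 & B2).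
  destruct (DX _ _ _ _ _ _ Hp HX1 HX2) as (S & U1 & U2).
  exists (Res S l); split; apply dtrans_res; assumption.
Qed.

Lemma diamond_sum X Y : diamond X -> diamond Y -> diamond (Sum X Y).
Proof.
  intros DX DY b b' th th' Q R Hp H1 H2.
  destruct (dtrans_sum_inv H1) as [(t & X1 & -> & -> & HX1 & S1) | (t & Y1 & -> & -> & HY1 & S1)];
  destruct (dtrans_sum_inv H2) as [(t' & X2 & -> & -> & HX2 & S2) | (t' & Y2 & -> & -> & HY2 & S2)];
  inversion Hp; subst.
  - destruct (DX _ _ _ _ _ _ ltac:(eassumption) HX1 HX2) as (S & U1 & U2).
    exists (Sum S Y); split; apply dtrans_sumL; assumption.
  - destruct (DY _ _ _ _ _ _ ltac:(eassumption) HY1 HY2) as (S & U1 & U2).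
    exists (Sum X S); split; apply dtrans_sumR; assumption.
Qed.

Lemma diamond_kpre a k X : diamond X -> diamond (KPre a k X).
Proof.
  intros DX b b' th th' Q R Hp H1 H2.
  destruct (dtrans_kpre_inv H1) as [(X1 & -> & HX1 & N1) | (_ & -> & _)]; [| inversion Hp].
  destruct (dtrans_kpre_inv H2) as [(X2 & -> & HX2 & N2) | (_ & -> & _)]; [| inversion Hp].
  destruct (DX _ _ _ _ _ _ Hp HX1 HX2) as (S & U1 & U2).
  exists (KPre a k S); split; apply dtrans_kpre; assumption.
Qed.

Lemma par_square_sides b b' X X1 Y Y2 t t' :
  dtrans b X t X1 -> dtrans b' Y t' Y2 -> pkey t <> pkey t' ->
  ~ In (pkey t) (keys Y) -> ~ In (pkey t') (keys X) ->
  dtrans b' (Par X1 Y) (PPar SR t') (Par X1 Y2) /\ dtrans b (Par X Y2) (PPar SL t) (Par X1 Y2).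
Proof.
  intros HX HY Hk NY NX; split.
  - apply dtrans_parR; [assumption | exact (dtrans_key_notin HX (not_eq_sym Hk) NX)].
  - apply dtrans_parL; [assumption | exact (dtrans_key_notin HY Hk NY)].
Qed.

Lemma diamond_par_left_syn X Y b b' t tL tR l X1 X2 Y2 :
  diamond X -> pind t tL -> dtrans b X t X1 -> ~ In (pkey t) (keys Y) ->
  dtrans b' X tL X2 -> dtrans b' Y tR Y2 ->
  pact tL = AL l -> pact tR = AL (compl l) -> pkey tL = pkey tR ->
  exists S, dtrans b' (Par X1 Y) (PSyn tL tR) S /\ dtrans b (Par X2 Y2) (PPar SL t) S.
Proof.
  intros DX Hp HX1 N1 HX2 HY2 A B K.
  destruct (DX _ _ _ _ _ _ Hp HX1 HX2) as (S & U1 & U2).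
  exists (Par S Y2); split.
  - exact (dtrans_syn U1 HY2 A B K).
  - apply dtrans_parL; [assumption |].
    apply (dtrans_key_notin HY2); [| assumption].
    rewrite <- K; exact (square_keys_neq HX1 HX2 U1).
Qed.

Lemma diamond_par_right_syn X Y b b' t tL tR l Y1 X2 Y2 :
  diamond Y -> pind t tR -> dtrans b Y t Y1 -> ~ In (pkey t) (keys X) ->
  dtrans b' X tL X2 -> dtrans b' Y tR Y2 ->
  pact tL = AL l -> pact tR = AL (compl l) -> pkey tL = pkey tR ->
  exists S, dtrans b' (Par X Y1) (PSyn tL tR) S /\ dtrans b (Par X2 Y2) (PPar SR t) S.
Proof.
  intros DY Hp HY1 N1 HX2 HY2 A B K.
  destruct (DY _ _ _ _ _ _ Hp HY1 HY2) as (S & U1 & U2).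
  exists (Par X2 S); split.
  - exact (dtrans_syn HX2 U1 A B K).
  - apply dtrans_parR; [assumption |].
    apply (dtrans_key_notin HX2); [| assumption].
    rewrite K; exact (square_keys_neq HY1 HY2 U1).
Qed.

Lemma diamond_par X Y : diamond X -> diamond Y -> diamond (Par X Y).
Proof.
  intros DX DY b b' th th' Q R Hp H1 H2.
  destruct (dtrans_par_inv H1) as
    [(t & X1 & -> & -> & HX1 & N1) | [(t & Y1 & -> & -> & HY1 & N1) |
     (tL & tR & X1 & Y1 & l & -> & -> & HX1 & HY1 & A1 & B1 & K1)]];
  destruct (dtrans_par_inv H2) as
    [(t' & X2 & -> & -> & HX2 & N2) | [(t' & Y2 & -> & -> & HY2 & N2) |
     (tL' & tR' & X2 & Y2 & l' & -> & -> & HX2 & HY2 & A2 & B2 & K2)]];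
  inversion Hp as [| ? ? ? Hp' | ? ? ? Hk | ? ? ? ? Hp' | ? ? ? ? Hp' | ? ? ? ? HpL HpR];
  subst; simpl in *.
  - destruct (DX _ _ _ _ _ _ Hp' HX1 HX2) as (S & U1 & U2).
    exists (Par S Y); split; apply dtrans_parL; assumption.
  - exists (Par X1 Y2); exact (par_square_sides HX1 HY2 Hk N1 N2).
  - exact (diamond_par_left_syn DX Hp' HX1 N1 HX2 HY2 A2 B2 K2).
  - destruct (par_square_sides HX2 HY1 (not_eq_sym Hk) N2 N1).
    exists (Par X2 Y1); split; assumption.
  - destruct (DY _ _ _ _ _ _ Hp' HY1 HY2) as (S & U1 & U2).
    exists (Par X S); split; apply dtrans_parR; assumption.
  - exact (diamond_par_right_syn DY Hp' HY1 N1 HX2 HY2 A2 B2 K2).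
  - destruct (diamond_par_left_syn DX (pind_sym Hp') HX2 N2 HX1 HY1 A1 B1 K1) as (S & U1 & U2).
    exists S; split; assumption.
  - destruct (diamond_par_right_syn DY (pind_sym Hp') HY2 N2 HX1 HY1 A1 B1 K1) as (S & U1 & U2).
    exists S; split; assumption.
  - destruct (DX _ _ _ _ _ _ HpL HX1 HX2) as (S & U1 & U2).
    destruct (DY _ _ _ _ _ _ HpR HY1 HY2) as (S' & U1' & U2').
    exists (Par S S'); split; eapply dtrans_syn; eassumption.
Qed.

Lemma pind_square b b' P th th' Q R :
  pind th th' -> dtrans b P th Q -> dtrans b' P th' R ->
  exists S, dtrans b' Q th' S /\ dtrans b R th S.
Proof.
  revert b b' th th' Q R.
  induction P as [| a X _ | X IHX l | X IHX Y IHY | X IHX Y IHY | a k X IHX].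
  - intros b b' th th' Q R _ H1; destruct (dtrans_nil_inv H1).
  - intros b b' th th' Q R Hp H1; destruct (dtrans_pre_inv H1) as (? & ? & ->); inversion Hp.
  - exact (diamond_res IHX).
  - exact (diamond_sum IHX IHY).
  - exact (diamond_par IHX IHY).
  - exact (diamond_kpre IHX).
Qed.

Definition backward_pind (P : proc) : Prop :=
  forall Q1 Q2 t1 t2, ptrans Q1 t1 P -> ptrans Q2 t2 P -> t1 <> t2 -> pind t1 t2.

Lemma backward_pind_par X Y : backward_pind X -> backward_pind Y -> backward_pind (Par X Y).
Proof.
  intros IX IY Q1 Q2 th th' H1 H2 Hne.
  destruct (dtrans_par_inv (b := false) H1) as
    [(t & X1 & -> & -> & HX1 & N1) | [(t & Y1 & -> & -> & HY1 & N1) |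
     (tL & tR & X1 & Y1 & l & -> & -> & HX1 & HY1 & A1 & B1 & K1)]];
  destruct (dtrans_par_inv (b := false) H2) as
    [(t' & X2 & -> & -> & HX2 & N2) | [(t' & Y2 & -> & -> & HY2 & N2) |
     (tL' & tR' & X2 & Y2 & l' & -> & -> & HX2 & HY2 & A2 & B2 & K2)]];
  simpl in *.
  - constructor; apply (IX _ _ _ _ HX1 HX2); congruence.
  - apply (i_par_opp SL); intro E; apply N2; rewrite <- E; exact (ptrans_key_in HX1).
  - apply (i_par_syn SL); apply (IX _ _ _ _ HX1 HX2); intros ->.
    apply N1; rewrite K2; exact (ptrans_key_in HY2).
  - apply (i_par_opp SR); intro E; apply N2; rewrite <- E; exact (ptrans_key_in HY1).
  - constructor; apply (IY _ _ _ _ HY1 HY2); congruence.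
  - apply (i_par_syn SR); apply (IY _ _ _ _ HY1 HY2); intros ->.
    apply N1; rewrite <- K2; exact (ptrans_key_in HX2).
  - apply (i_syn_par SL); apply (IX _ _ _ _ HX1 HX2); intros <-.
    apply N2; rewrite K1; exact (ptrans_key_in HY1).
  - apply (i_syn_par SR); apply (IY _ _ _ _ HY1 HY2); intros <-.
    apply N2; rewrite <- K1; exact (ptrans_key_in HX1).
  - assert (Hk : pkey tL <> pkey tL').
    { intro E.
      destruct (ptrans_backward_det HX1 HX2 E) as [-> ->].
      destruct (ptrans_backward_det HY1 HY2 ltac:(congruence)) as [-> ->].
      apply Hne; reflexivity. }
    constructor; [apply (IX _ _ _ _ HX1 HX2) | apply (IY _ _ _ _ HY1 HY2)];
      intros ->; apply Hk; congruence.
Qed.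

Lemma ptrans_backward_pind P Q1 Q2 t1 t2 :
  ptrans Q1 t1 P -> ptrans Q2 t2 P -> t1 <> t2 -> pind t1 t2.
Proof.
  revert Q1 Q2 t1 t2.
  induction P as [| a X _ | X IHX l | X IHX Y IHY | X IHX Y IHY | a k X IHX];
    intros Q1 Q2 t1 t2 H1 H2 Hne.
  - inversion H1.
  - inversion H1.
  - destruct (dtrans_res_inv (b := false) H1) as (X1 & -> & HX1 & _).
    destruct (dtrans_res_inv (b := false) H2) as (X2 & -> & HX2 & _).
    exact (IHX _ _ _ _ HX1 HX2 Hne).
  - destruct (dtrans_sum_inv (b := false) H1) as
      [(t & X1 & -> & -> & HX1 & S1) | (t & Y1 & -> & -> & HY1 & S1)];
    destruct (dtrans_sum_inv (b := false) H2) as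
      [(t' & X2 & -> & -> & HX2 & S2) | (t' & Y2 & -> & -> & HY2 & S2)].
    + constructor; apply (IHX _ _ _ _ HX1 HX2); congruence.
    + destruct (std_no_ptrans_to S2 HX1).
    + destruct (std_no_ptrans_to S2 HY1).
    + constructor; apply (IHY _ _ _ _ HY1 HY2); congruence.
  - exact (backward_pind_par IHX IHY H1 H2 Hne).
  - destruct (dtrans_kpre_inv (b := false) H1) as [(X1 & -> & HX1 & _) | (_ & -> & S1 & ->)];
    destruct (dtrans_kpre_inv (b := false) H2) as [(X2 & -> & HX2 & _) | (_ & -> & S2 & ->)].
    + exact (IHX _ _ _ _ HX1 HX2 Hne).
    + destruct (std_no_ptrans_to S2 HX1).
    + destruct (std_no_ptrans_to S1 HX2).
    + destruct (Hne eq_refl).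
Qed.

Lemma ptrans_erase P t Q : ptrans P t Q -> ctrans P (erase t) Q.
Proof.
  unfold erase; induction 1 as [| | | | | X Y X' Y' tL tR l _ IHL _ IHR HL HR Hk | |];
    simpl in *; try (constructor; assumption).
  rewrite HL in IHL; rewrite HR, <- Hk in IHR; econstructor; eassumption.
Qed.

Lemma ctrans_lift P l Q : ctrans P l Q -> exists t, ptrans P t Q /\ erase t = l.
Proof.
  unfold erase; induction 1;
    repeat match goal with
           | IH : exists t, _ /\ (pact t, pkey t) = _ |- _ =>
               destruct IH as (? & ? & E); injection E; clear E; intros; subst
           end.
  all: eexists; split; [econstructor; eauto | simpl; congruence].
Qed.

Lemma dtrans_erase b P th Q : dtrans b P th Q -> valid ctrans (Tr P (erase th) Q b).
Proof. destruct b; apply ptrans_erase. Qed.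

Lemma square_label_det b b' P Q R S th th' th2 th3 :
  pind th th' ->
  dtrans b P th Q -> dtrans b' P th' R -> dtrans b' Q th2 S -> dtrans b R th3 S ->
  pkey th2 = pkey th' -> pkey th3 = pkey th -> th2 = th'.
Proof.
  intros Hp H1 H2 H3 H4 K2 K3.
  destruct (pind_square Hp H1 H2) as (S1 & U1 & U2).
  destruct b'; [destruct b |].
  - (* the two backward moves out of S close a square that leads back to P *)
    assert (Hne : th2 <> th3).
    { intros ->; apply (square_keys_neq H1 H2 U1); congruence. }
    destruct (pind_square (b := false) (b' := false) (ptrans_backward_pind H3 H4 Hne) H3 H4)
      as (S0 & V1 & V2).
    destruct (ptrans_backward_det H1 V1 (eq_sym K3)) as [_ <-].
    exact (ptrans_label_det V2 H2).
  - destruct (ptrans_backward_det H4 U2 K3) as [_ ->].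
    exact (ptrans_label_det H3 U1).
  - exact (proj1 (ptrans_backward_det H3 U1 K2)).
Qed.

Lemma ccskp_SP : SP ptrans std pI.
Proof.
  intros [P th Q b] [P' th' R b'] Ht Hu Hs (_ & Hp); simpl in *; subst P'.
  destruct (pind_square Hp (proj2 Ht) (proj2 Hu)) as (S & U1 & U2).
  exists (Tr Q th' S b'), (Tr R th S b); exact (square_intro Ht Hu U1 U2).
Qed.

Lemma ccskp_BTI : BTI ptrans std pI.
Proof.
  intros [P th Q b] [P' th' R b'] (_ & Ht) (_ & Hu) Hb Hb' Hs Hne; simpl in *; subst P' b b'.
  change (ptrans Q th P) in Ht; change (ptrans R th' P) in Hu.
  split; simpl.
  - exact (valid_reach (t := Tr P th' R false) Hu).
  - apply (ptrans_backward_pind Ht Hu); intros <-.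
    destruct (ptrans_backward_det Ht Hu eq_refl) as [_ <-]; exact (Hne eq_refl).
Qed.

Lemma ccskp_WF : WF ptrans std.
Proof. exact (WF_of_measure (m := fun P => length (keys P)) ptrans_keys_length). Qed.

Lemma ccskp_PCI : PCI ptrans std pI.
Proof.
  intros t u u' t' Hsq (_ & Hp); split.
  - exact (square_connected_inv Hsq).
  - destruct Hsq as (_ & _ & _ & _ & _ & _ & _ & _ & E & _); simpl; rewrite E.
    exact (pind_sym Hp).
Qed.

Lemma ccskp_IRE : IRE ptrans std pI.
Proof.
  intros t t' u _ _ _ He (Hc & Hp); split.
  - exact (ev_eq_connected He Hc).
  - rewrite (ev_eq_lab He); exact Hp.
Qed.

Lemma ccskp_RPI : RPI ptrans std pI.
Proof. intros t t' (_ & Ht) _ (Hc & Hp); exact (conj (connected_inv Ht Hc) Hp). Qed.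

Lemma corr_exists t : valid ctrans t -> exists th, corr t th.
Proof.
  destruct t as [P l Q []]; intro H; destruct (ctrans_lift H) as (th & Hth & E);
    exists th; split; assumption.
Qed.

Lemma corr_det t th1 th2 : corr t th1 -> corr t th2 -> th1 = th2.
Proof. destruct t as [P l Q []]; intros [H1 _] [H2 _]; exact (ptrans_label_det H1 H2). Qed.

Lemma corr_inv t th : corr t th -> corr (inv t) th.
Proof. destruct t as [P l Q []]; intros [H E]; split; assumption. Qed.

Lemma square_corr t u u' t' th th' :
  square ctrans std t u u' t' -> corr t th -> corr u th' -> pind th th' ->
  corr u' th' /\ corr t' th.
Proof.
  destruct t as [P a Q b], u as [P1 c R b1], u' as [Q1 c1 S b2], t' as [R1 a1 S1 b3].
  intros (_ & _ & (_ & Hu') & (_ & Ht') & E1 & E2 & E3 & E4 & E5 & E6 & E7 & E8)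
    [Ct Lt] [Cu Lu] Hp; simpl in *; subst.
  destruct (corr_exists Hu') as (th2 & C2 & L2).
  destruct (corr_exists Ht') as (th3 & C3 & L3).
  unfold erase in *; simpl in *.
  assert (E2 : th2 = th') by (apply (square_label_det Hp Ct Cu C2 C3); simpl; congruence).
  assert (E3 : th3 = th)
    by (apply (square_label_det (pind_sym Hp) Cu Ct C3 C2); simpl; congruence).
  subst; split; split; assumption.
Qed.

Lemma ev_eq_corr t t' : ev_eq ctrans std cI t t' -> forall th, corr t th <-> corr t' th.
Proof.
  induction 1 as [t t' (u & u' & Hsq & _ & th0 & th0' & Ct & Cu & Hp) | t | t t' _ IH
                  | t t' t'' _ IH1 _ IH2]; intro th.
  - destruct (square_corr Hsq Ct Cu Hp) as [_ Ct'].
    split; intro C; [rewrite (corr_det C Ct) | rewrite (corr_det C Ct')]; assumption.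
  - reflexivity.
  - symmetry; exact (IH th).
  - rewrite (IH1 th); exact (IH2 th).
Qed.

Lemma ccsk_SP : SP ctrans std cI.
Proof.
  intros [P l Q b] [P' l' R b'] Ht Hu Hs (_ & th & th' & (Ct & Lt) & (Cu & Lu) & Hp);
    simpl in *; subst P' l l'.
  destruct (pind_square Hp Ct Cu) as (S & U1 & U2).
  exists (Tr Q (erase th') S b'), (Tr R (erase th) S b).
  exact (square_intro Ht Hu (dtrans_erase U1) (dtrans_erase U2)).
Qed.

Lemma ccsk_BTI : BTI ctrans std cI.
Proof.
  intros [P l Q b] [P' l' R b'] (_ & Ht) (_ & Hu) Hb Hb' Hs Hne; simpl in *; subst P' b b'.
  destruct (corr_exists Ht) as (th & Ct & Lt), (corr_exists Hu) as (th' & Cu & Lu).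
  change (ptrans Q th P) in Ct; change (ptrans R th' P) in Cu.
  split.
  - exact (valid_reach (t := Tr P l' R false) Hu).
  - exists th, th'; split; [split; assumption |]; split; [split; assumption |].
    apply (ptrans_backward_pind Ct Cu); intros <-.
    destruct (ptrans_backward_det Ct Cu eq_refl) as [_ <-].
    apply Hne; simpl in *; congruence.
Qed.

Lemma ccsk_WF : WF ctrans std.
Proof.
  apply (WF_of_measure (m := fun P => length (keys P))).
  intros P l Q H; destruct (ctrans_lift H) as (th & Hth & _); exact (ptrans_keys_length Hth).
Qed.

Lemma ccsk_PCI : PCI ctrans std cI.
Proof.
  intros t u u' t' Hsq (_ & th & th' & Ct & Cu & Hp).
  split; [exact (square_connected_inv Hsq) |].
  exists th', th; split; [exact (proj1 (square_corr Hsq Ct Cu Hp)) |].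
  exact (conj (corr_inv Ct) (pind_sym Hp)).
Qed.

Lemma ccsk_IRE : IRE ctrans std cI.
Proof.
  intros t t' u _ _ _ He (Hc & th & th' & Ct & Cu & Hp).
  split; [exact (ev_eq_connected He Hc) |].
  exists th, th'; exact (conj (proj2 (ev_eq_corr He th) Ct) (conj Cu Hp)).
Qed.

Lemma ccsk_RPI : RPI ctrans std cI.
Proof.
  intros t t' (_ & Ht) _ (Hc & th & th' & Ct & Cu & Hp).
  split; [exact (connected_inv Ht Hc) |].
  exists th, th'; exact (conj (corr_inv Ct) (conj Cu Hp)).
Qed.

Theorem theorem6p1 :
  (SP ptrans std pI /\ BTI ptrans std pI /\ WF ptrans std /\
   PCI ptrans std pI /\ IRE ptrans std pI /\ RPI ptrans std pI) /\
  (SP ctrans std cI /\ BTI ctrans std cI /\ WF ctrans std /\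
   PCI ctrans std cI /\ IRE ctrans std cI /\ RPI ctrans std cI).
Proof.
  split.
  - exact (conj ccskp_SP (conj ccskp_BTI (conj ccskp_WF
             (conj ccskp_PCI (conj ccskp_IRE ccskp_RPI))))).
  - exact (conj ccsk_SP (conj ccsk_BTI (conj ccsk_WF
             (conj ccsk_PCI (conj ccsk_IRE ccsk_RPI))))).
Qed.
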